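(* Let $R=K[x_1,\ldots,x_n,x_{n+1}]$ over a field $K$, let $I\subset R$ be a monomial ideal with $\gcd(u,x_{n+1})=1$ for all $u\in\mathcal{G}(I)$, let $\mathfrak{m}=(x_1,\ldots,x_{n+1})$ and $\mathfrak{q}=(x_1,\ldots,x_n)$, assume $I\neq\mathfrak{q}$, and set $L:=I+x_{n+1}\mathfrak{q}$. Suppose that $(I^t:v)=\mathfrak{q}$ for some $t\geq1$ and some monomial $v\in R$, and that there is $\lambda\in\{1,\ldots,n\}$ such that whenever $x_\lambda v=f_1\cdots f_tM$ with $f_1,\ldots,f_t\in\mathcal{G}(I)$ and $M$ a monomial of $R$, there is an index $j$ with $x_\lambda\mid Mf_j$ and $Mf_j/x_\lambda\neq1$. Then $\mathfrak{m}\in\mathrm{Ass}(R/L^t)$.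
   Context: $\mathcal{G}(I)$ denotes the unique minimal set of monomial generators of a monomial ideal $I$. *)

From mathcomp Require Import all_boot all_order all_algebra.
From mathcomp Require Import mpoly.
Set Implicit Arguments. Unset Strict Implicit. Unset Printing Implicit Defensive.
Import GRing.Theory.
Local Open Scope ring_scope.

Section Ideals.
Variables (K : fieldType) (k : nat).
Local Notation R := {mpoly K[k]}.

Definition is_ideal (J : R -> Prop) : Prop :=
  [/\ J 0, (forall a b, J a -> J b -> J (a + b)) & (forall r a, J a -> J (r * a))].

Definition ideal_gen (S : R -> Prop) : R -> Prop :=
  fun f => forall J, is_ideal J -> (forall g, S g -> J g) -> J f.

Definition ideal_eq (I J : R -> Prop) : Prop := forall f, I f <-> J f.

Definition ideal_sum (I J : R -> Prop) : R -> Prop :=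
  ideal_gen (fun g => I g \/ J g).

Definition ideal_mul (I J : R -> Prop) : R -> Prop :=
  ideal_gen (fun g => exists a b, [/\ I a, J b & g = a * b]).

Fixpoint ideal_pow (I : R -> Prop) (t : nat) : R -> Prop :=
  if t is t'.+1 then ideal_mul (ideal_pow I t') I else (fun _ => True).

Definition ideal_colon (I : R -> Prop) (f : R) : R -> Prop := fun g => I (g * f).

(* monomials are identified with their exponent vectors m : 'X_{1..k},
   the monomial itself being the polynomial 'X_[m] *)
Definition monomial_ideal (I : R -> Prop) : Prop :=
  exists A : 'X_{1..k} -> Prop,
    ideal_eq I (ideal_gen (fun g => exists2 m, A m & g = 'X_[m])).

(* G(I): the minimal monomial generators = monomials of I minimal for divisibility
   among the monomials of I *)
Definition mingens (I : R -> Prop) (u : 'X_{1..k}) : Prop :=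
  I 'X_[u] /\ forall w : 'X_{1..k}, I 'X_[w] -> (w <= u)%MM -> w = u.

(* P in Ass(R/J): P is the annihilator of some element (class of f) of R/J *)
Definition is_ass (J : R -> Prop) (P : R -> Prop) : Prop :=
  exists f : R, ideal_eq P (ideal_colon J f).

End Ideals.

From mathcomp Require Import all_boot all_order all_algebra.
From mathcomp Require Import mpoly.
From mathcomp Require Import zify.
From Stdlib Require Import Classical.
Set Implicit Arguments. Unset Strict Implicit. Unset Printing Implicit Defensive.
Import GRing.Theory.
Local Open Scope ring_scope.

(* Everything reduces to exponent vectors.  Let G = G(I), let v0 be v with its
   x_{n+1}-exponent erased, and let G_L = G ∪ {x_{n+1} x_j | j <= n}, which
   generates L.  Since no element of G involves x_{n+1}, (I^t : v) = q gives
   x_i v0 ∈ I^t ⊆ L^t for i <= n, while v0 ∉ L^t because v ∉ I^t.  For the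
   remaining variable pick x_{i0} ∉ I (it exists as I ≠ q) and a product
   a b <= x_{i0} v0 with a ∈ G^(t-1), b ∈ G, arranged so that a <= v0.  As
   b ∉ {1, x_{i0}}, some x_j with a x_j <= v0 exists, and
   a (x_{n+1} x_j) <= x_{n+1} v0 shows x_{n+1} v0 ∈ L^t.  Hence v0 is a socle
   monomial of R/L^t and m = (L^t : v0). *)

Section MonomialSets.
Variable k : nat.
Local Notation mon := 'X_{1..k}.

Definition mset_add (S1 S2 : mon -> Prop) : mon -> Prop :=
  fun m => exists a b, [/\ S1 a, S2 b & m = (a + b)%MM].

Fixpoint mset_pow (S : mon -> Prop) (t : nat) : mon -> Prop :=
  if t is t'.+1 then mset_add (mset_pow S t') S else (fun m => m = 0%MM).

Lemma mset_pow_sub (S S' : mon -> Prop) t s :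
  (forall m, S m -> S' m) -> mset_pow S t s -> mset_pow S' t s.
Proof.
move=> subSS'; elim: t s => [//|t IH] _ [a [b [Sa Sb ->]]].
by exists a, b; split; [apply: IH | apply: subSS' |].
Qed.

Lemma mset_pow0 (S : mon -> Prop) t : S 0%MM -> mset_pow S t 0%MM.
Proof. by move=> S0; elim: t => [//|t IH]; exists 0%MM, 0%MM; rewrite addm0. Qed.

Lemma mset_pow_not_le_neq0 (S : mon -> Prop) t w u :
  ~ (exists2 s, mset_pow S t s & (s <= w)%MM) -> S u -> u != 0%MM.
Proof.
move=> not_le Su; apply/eqP => u0; apply: not_le; exists 0%MM.
  by apply: mset_pow0; rewrite -u0.
by apply/mnm_lepP => j; rewrite mnm0E.
Qed.

Lemma mset_pow_coord0 (S : mon -> Prop) i t s :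
  (forall m, S m -> m i = 0%N) -> mset_pow S t s -> s i = 0%N.
Proof.
move=> S0; elim: t s => [_ -> | t IH _ [a [b [Sa Sb ->]]]]; first by rewrite mnm0E.
by rewrite mnmDE (IH _ Sa) (S0 _ Sb).
Qed.

Lemma mset_pow_restrict (S S' : mon -> Prop) i t s :
  (forall m, S' m -> S m \/ m i != 0%N) ->
  mset_pow S' t s -> s i = 0%N -> mset_pow S t s.
Proof.
move=> S'S; elim: t s => [//|t IH] _ [a [b [S'a S'b ->]]].
rewrite mnmDE => /eqP; rewrite addn_eq0 => /andP[/eqP a0 /eqP b0].
exists a, b; split => //; first exact: IH.
by case: (S'S _ S'b) => //; rewrite b0.
Qed.

Lemma mset_pow_split_coord (S : mon -> Prop) i t s :
  mset_pow S t.+1 s -> s i != 0%N ->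
  exists a b, [/\ mset_pow S t a, S b, b i != 0%N & s = (a + b)%MM].
Proof.
elim: t s => [|t IH] _ [a [b [Sa Sb ->]]]; rewrite mnmDE => si.
  by exists a, b; split => //; move: Sa si => /= ->; rewrite mnm0E.
have [bi | bi0] := eqVneq (b i) 0%N; last by exists a, b.
have [|a' [b' [Sa' Sb' b'i ->]]] := IH a Sa; first by rewrite bi addn0 in si.
exists (a' + b)%MM, b'; split => //; first by exists a', b.
by rewrite -!addmA [(b' + b)%MM]addmC.
Qed.

(* The split is chosen so that the last factor carries x_i whenever the
   product exceeds w in coordinate i. *)
Lemma mset_pow_split_le (S : mon -> Prop) i t w s :
  mset_pow S t.+1 s -> (s <= U_(i) + w)%MM ->
  exists a b, [/\ mset_pow S t a, S b, (a <= w)%MM & (a + b <= U_(i) + w)%MM].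
Proof.
move=> Ss le_s; have [si_le | w_lt] := leqP (s i) (w i).
  case: Ss => a [b [Sa Sb s_ab]]; exists a, b; split; rewrite -?s_ab //.
  apply/mnm_lepP => j; move/mnm_lepP: le_s => /(_ j); move: si_le.
  by rewrite s_ab !mnmDE mnm1E; case: (eqVneq i j) => [<-|_] /=; lia.
have [|a [b [Sa Sb bi s_ab]]] := mset_pow_split_coord (i := i) Ss; first by lia.
exists a, b; split; rewrite -?s_ab //.
apply/mnm_lepP => j; move/mnm_lepP: le_s => /(_ j); move: bi.
by rewrite s_ab !mnmDE mnm1E; case: (eqVneq i j) => [<-|_] /=; lia.
Qed.

Lemma le_add_unit (a b w : mon) i :
  (a <= w)%MM -> (a + b <= U_(i) + w)%MM -> b != 0%MM -> b != U_(i)%MM ->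
  exists j, (a + U_(j) <= w)%MM.
Proof.
move=> /mnm_lepP a_le /mnm_lepP ab_le b_neq0 b_neqi.
case: (pickP (fun j => a j < w j)%N) => [j aj_lt | a_ge].
  exists j; apply/mnm_lepP => l; have := a_le l; rewrite mnmDE mnm1E.
  by case: (eqVneq j l) => [<-|_] /=; lia.
have b_le l : (b l <= (i == l))%N.
  have := a_le l; have := ab_le l; move/negbT: (a_ge l); rewrite -leqNgt.
  by rewrite !mnmDE mnm1E /=; lia.
have [bi0 | bi_neq0] := eqVneq (b i) 0%N.
  case/eqP: b_neq0; apply/mnmP => l; rewrite mnm0E.
  by have := b_le l; case: (eqVneq i l) => [<-|_] /=; lia.
case/eqP: b_neqi; apply/mnmP => l; rewrite mnm1E.
by have := b_le l; case: (eqVneq i l) => [<-|_] /=; lia.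
Qed.

Lemma mnm_neq0P (m : mon) : m != 0%MM -> exists j, m j != 0%N.
Proof.
move=> m_neq0; case: (pickP (fun j => m j != 0%N)) => [j|m_eq0]; first by exists j.
by case/eqP: m_neq0; apply/mnmP => j; rewrite mnm0E; apply/eqP/negbFE/m_eq0.
Qed.

Lemma mdeg_lt (w m : mon) : (w <= m)%MM -> w != m -> (mdeg w < mdeg m)%N.
Proof.
move=> le ne; rewrite -(submK le) mdegD -{1}[mdeg w]add0n ltn_add2r lt0n mdeg_eq0.
by apply: contra ne => /eqP E; rewrite -(submK le) E add0m.
Qed.

End MonomialSets.

Section MonomialIdeals.
Variables (K : fieldType) (k : nat).
Local Notation R := {mpoly K[k]}.
Local Notation mon := 'X_{1..k}.

Lemma ideal0 (J : R -> Prop) : is_ideal J -> J 0.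
Proof. by case. Qed.

Lemma idealD (J : R -> Prop) a b : is_ideal J -> J a -> J b -> J (a + b).
Proof. by case=> _ JD _; apply: JD. Qed.

Lemma idealM (J : R -> Prop) r a : is_ideal J -> J a -> J (r * a).
Proof. by case=> _ _ JM; apply: JM. Qed.
Arguments idealM {J r a}.

Lemma ideal_gen_is_ideal (S : R -> Prop) : is_ideal (ideal_gen S).
Proof.
split; first by move=> J [].
- by move=> a b Ja Jb J HJ SJ; apply: idealD HJ (Ja J HJ SJ) (Jb J HJ SJ).
- by move=> r a Ja J HJ SJ; apply: idealM HJ (Ja J HJ SJ).
Qed.

Lemma ideal_gen_sub (S : R -> Prop) g : S g -> ideal_gen S g.
Proof. by move=> Sg J _; apply. Qed.

Lemma ideal_gen_min (S J : R -> Prop) f :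
  is_ideal J -> (forall g, S g -> J g) -> ideal_gen S f -> J f.
Proof. by move=> HJ SJ; apply. Qed.

Lemma ideal_gen_ext (S S' : R -> Prop) :
  (forall g, S g <-> S' g) -> ideal_eq (ideal_gen S) (ideal_gen S').
Proof.
by move=> SS' f; split; apply: ideal_gen_min (ideal_gen_is_ideal _) _ => g /SS';
  apply: ideal_gen_sub.
Qed.

Lemma ideal_eq_is_ideal (J J' : R -> Prop) : ideal_eq J J' -> is_ideal J' -> is_ideal J.
Proof.
move=> E [J'0 J'D J'M]; split; first exact/E.
- by move=> a b /E Ja /E Jb; apply/E; apply: J'D.
- by move=> r a /E Ja; apply/E; apply: J'M.
Qed.

Lemma ideal_colon_is_ideal (J : R -> Prop) f : is_ideal J -> is_ideal (ideal_colon J f).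
Proof.
move=> HJ; split; rewrite /ideal_colon.
- by rewrite mul0r; apply: ideal0.
- by move=> a b Ja Jb; rewrite mulrDl; apply: idealD.
- by move=> r a Ja; rewrite -mulrA; apply: idealM.
Qed.

Lemma ideal_msupp (J : R -> Prop) g :
  is_ideal J -> (forall m, m \in msupp g -> J 'X_[m]) -> J g.
Proof.
move=> HJ; rewrite [g in J g]mpolyE.
elim: (msupp g) => [|m r IH] Jr; first by rewrite big_nil; apply: ideal0.
rewrite big_cons; apply: (idealD HJ).
  by rewrite -mul_mpolyC; apply: (idealM HJ); apply: Jr; rewrite mem_head.
by apply: IH => m' r_m'; apply: Jr; rewrite inE r_m' orbT.
Qed.

Lemma ideal_gen_dvd_var (S : R -> Prop) j (m : mon) :
  S 'X_j -> m j != 0%N -> ideal_gen S 'X_[m].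
Proof.
move=> Sj; rewrite -lep1mP => mj; rewrite -(submK mj) mpolyXD.
by apply: idealM (ideal_gen_is_ideal S) _; apply: ideal_gen_sub.
Qed.

Definition mideal (S : mon -> Prop) : R -> Prop :=
  ideal_gen (fun g => exists2 m, S m & g = 'X_[m]).

Lemma mideal_is_ideal S : is_ideal (mideal S).
Proof. exact: ideal_gen_is_ideal. Qed.

Lemma mideal_gen (S : mon -> Prop) m : S m -> mideal S 'X_[m].
Proof. by move=> Sm; apply: ideal_gen_sub; exists m. Qed.

Lemma mideal_supp (S : mon -> Prop) h :
  mideal S h -> forall m, m \in msupp h -> exists2 s, S s & (s <= m)%MM.
Proof.
apply: (ideal_gen_min (J := fun h => forall m, m \in msupp h -> exists2 s, S s & (s <= m)%MM)).
- split; first by move=> m; rewrite mcoeff_msupp mcoeff0 eqxx.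
  + by move=> a b Sa Sb m /msuppD_le; rewrite mem_cat => /orP[/Sa|/Sb].
  + move=> r a Sa m /msuppM_le /allpairsP [[m1 m2] /= [_ /Sa [s Ss le] ->]].
    by exists s => //; apply: lepm_trans le _; rewrite addmC; apply: lem_addr.
- move=> _ [m Sm ->] m'; rewrite msuppX mem_seq1 => /eqP ->.
  by exists m => //; apply: lepm_refl.
Qed.

Lemma midealXP (S : mon -> Prop) m : mideal S 'X_[m] <-> exists2 s, S s & (s <= m)%MM.
Proof.
split=> [Sm | [s Ss le]].
  by apply: mideal_supp Sm _ _; rewrite msuppX mem_head.
by rewrite -(submK le) mpolyXD; apply: idealM (mideal_is_ideal S) _; apply: mideal_gen.
Qed.

Lemma mideal_colon_const (S : mon -> Prop) g w :
  mideal S (g * 'X_[w]) -> g@_0%MM != 0 -> mideal S 'X_[w].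
Proof.
move=> /mideal_supp Sgw g0; apply/midealXP; apply: Sgw.
by rewrite mcoeff_msupp -[X in _@_X]addm0 mcoeffMX.
Qed.

Lemma mideal_mulM (S1 S2 : mon -> Prop) a b :
  mideal S1 a -> mideal S2 b -> mideal (mset_add S1 S2) (a * b).
Proof.
have HS := mideal_is_ideal (mset_add S1 S2).
move=> Sa Sb; move: Sa; apply: ideal_gen_min (ideal_colon_is_ideal b HS) _.
move=> _ [s1 S1s ->]; rewrite /ideal_colon mulrC; move: Sb.
apply: ideal_gen_min (ideal_colon_is_ideal 'X_[s1] HS) _ => _ [s2 S2s ->].
by rewrite /ideal_colon -mpolyXD; apply: mideal_gen; exists s1, s2; split => //; rewrite addmC.
Qed.

Lemma mideal_mul (J1 J2 : R -> Prop) S1 S2 :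
  ideal_eq J1 (mideal S1) -> ideal_eq J2 (mideal S2) ->
  ideal_eq (ideal_mul J1 J2) (mideal (mset_add S1 S2)).
Proof.
move=> E1 E2 f; split.
  apply: ideal_gen_min (mideal_is_ideal _) _ => _ [a [b [/E1 Sa /E2 Sb ->]]].
  exact: mideal_mulM.
apply: ideal_gen_min (ideal_gen_is_ideal _) _ => _ [_ [a [b [Sa Sb ->]]] ->].
rewrite mpolyXD; apply: ideal_gen_sub; exists 'X_[a], 'X_[b].
by split; [apply/E1; apply: mideal_gen | apply/E2; apply: mideal_gen |].
Qed.

Lemma mideal_sum (J1 J2 : R -> Prop) S1 S2 :
  ideal_eq J1 (mideal S1) -> ideal_eq J2 (mideal S2) ->
  ideal_eq (ideal_sum J1 J2) (mideal (fun m => S1 m \/ S2 m)).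
Proof.
move=> E1 E2 f; split.
  apply: ideal_gen_min (mideal_is_ideal _) _ => g [/E1|/E2];
    apply: ideal_gen_min (mideal_is_ideal _) _ => _ [m Sm ->]; apply: mideal_gen.
  - by left.
  - by right.
apply: ideal_gen_min (ideal_gen_is_ideal _) _ => _ [m [Sm|Sm] ->].
  by apply: ideal_gen_sub; left; apply/E1; apply: mideal_gen.
by apply: ideal_gen_sub; right; apply/E2; apply: mideal_gen.
Qed.

Lemma mideal_pow (J : R -> Prop) S t :
  ideal_eq J (mideal S) -> ideal_eq (ideal_pow J t) (mideal (mset_pow S t)).
Proof.
move=> E; elim: t => [|t IH] /=; last exact: mideal_mul.
move=> f; split=> // _; rewrite -[f]mulr1 -mpolyX0.
by apply: idealM (mideal_is_ideal _) _; apply: mideal_gen.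
Qed.

Lemma mingens_exists (I : R -> Prop) m :
  I 'X_[m] -> exists2 u, mingens I u & (u <= m)%MM.
Proof.
have [d] := ubnP (mdeg m); elim: d m => [|d IH] m; first by rewrite ltn0.
move=> lt_m Im.
have [Gm | not_Gm] := classic (mingens I m); first by exists m => //; apply: lepm_refl.
have [w not_minw] : exists w, ~ (I 'X_[w] -> (w <= m)%MM -> w = m).
  by apply: not_all_ex_not => minm; apply: not_Gm.
have [Iw not_le_eq] := imply_to_and _ _ not_minw.
have [le ne] := imply_to_and _ _ not_le_eq.
have [|u Gu le_u] := IH w _ Iw; first by apply: leq_trans (mdeg_lt le _) lt_m; apply/eqP.
by exists u => //; apply: lepm_trans le.
Qed.

Lemma monomial_idealE (I : R -> Prop) :
  monomial_ideal I -> ideal_eq I (mideal (mingens I)).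
Proof.
case=> A IA f; split.
  move/IA; apply: ideal_gen_min (mideal_is_ideal _) _ => _ [a Aa ->].
  have [|u Gu le] := @mingens_exists I a; first by apply/IA; apply: mideal_gen.
  by apply/midealXP; exists u.
have HI := ideal_eq_is_ideal IA (mideal_is_ideal A).
by apply: ideal_gen_min HI _ => _ [u [Iu _] ->].
Qed.

Lemma is_ass_maximal (J : R -> Prop) (S : mon -> Prop) w :
  ideal_eq J (mideal S) -> (forall i : 'I_k, J ('X_i * 'X_[w])) -> ~ J 'X_[w] ->
  is_ass J (ideal_gen (fun g : R => exists i : 'I_k, g = 'X_i)).
Proof.
move=> JS Jxw not_Jw; have HJ := ideal_eq_is_ideal JS (mideal_is_ideal S).
exists 'X_[w] => g; split.
  by apply: ideal_gen_min (ideal_colon_is_ideal _ HJ) _ => _ [i ->].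
move=> Jgw; have [g0 | g0] := eqVneq g@_0%MM 0; last first.
  by case: not_Jw; apply/JS; apply: mideal_colon_const g0; apply/JS.
apply: ideal_msupp (ideal_gen_is_ideal _) _ => m; rewrite mcoeff_msupp => gm.
have [|j mj] := @mnm_neq0P _ m; first by apply/eqP => m0; rewrite m0 g0 eqxx in gm.
by apply: ideal_gen_dvd_var mj; exists j.
Qed.

End MonomialIdeals.
Arguments mideal_is_ideal {K k} S.
Arguments midealXP {K k S m}.

Section LastVariable.
Variable n : nat.
Local Notation mon := 'X_{1..n.+1}.
Local Notation mx := (@ord_max n).

Lemma ord_lt_max (i : 'I_n.+1) : i != mx -> (i < n)%N.
Proof.
move=> i_neq; have := ltn_ord i; rewrite ltnS leq_eqVlt => /orP[/eqP i_n|//].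
by case/eqP: i_neq; apply: val_inj.
Qed.

Definition vars_q : mon -> Prop := fun m => exists2 i : 'I_n.+1, (i < n)%N & m = U_(i)%MM.

Definition gens_L (G : mon -> Prop) : mon -> Prop :=
  fun m => G m \/ mset_add (fun m => m = U_(mx)%MM) vars_q m.

Definition drop_last (m : mon) : mon := [multinom if i == mx then 0%N else m i | i < n.+1].

Lemma drop_lastE m j : drop_last m j = if j == mx then 0%N else m j.
Proof. by rewrite mnmE. Qed.

Lemma drop_last_le m : (drop_last m <= m)%MM.
Proof. by apply/mnm_lepP => j; rewrite drop_lastE; case: ifP. Qed.

Lemma le_drop_last (s a m : mon) :
  s mx = 0%N -> (s <= a + m)%MM -> (s <= a + drop_last m)%MM.
Proof.
move=> s0 /mnm_lepP le; apply/mnm_lepP => j; have := le j.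
by rewrite !mnmDE drop_lastE; case: eqVneq => [->|_]; rewrite ?s0.
Qed.

Variables (G : mon -> Prop) (t : nat).

Lemma mset_pow_gens_L_last0 s : mset_pow (gens_L G) t s -> s mx = 0%N -> mset_pow G t s.
Proof.
apply: mset_pow_restrict => m [Gm | [_ [b [-> _ ->]]]]; [by left | right].
by rewrite mnmDE mnm1E eqxx.
Qed.

Variables (v : mon) (i0 : 'I_n.+1).
Hypothesis G_last0 : forall u, G u -> u mx = 0%N.
Hypotheses (t_gt0 : (0 < t)%N) (i0_lt : (i0 < n)%N) (G_i0 : ~ G U_(i0)).
Hypothesis colon_q : forall i : 'I_n.+1,
  (i < n)%N -> exists2 s, mset_pow G t s & (s <= U_(i) + v)%MM.
Hypothesis pow_not_le_v : ~ exists2 s, mset_pow G t s & (s <= v)%MM.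

Lemma colon_q_drop_last (i : 'I_n.+1) :
  (i < n)%N -> exists2 s, mset_pow G t s & (s <= U_(i) + drop_last v)%MM.
Proof.
move=> lt_i; have [s Gs le] := colon_q lt_i; exists s => //.
by apply: le_drop_last le; apply: mset_pow_coord0 Gs.
Qed.

Lemma colon_last_drop_last :
  exists2 s, mset_pow (gens_L G) t s & (s <= U_(mx) + drop_last v)%MM.
Proof.
have [s Gs le] := colon_q_drop_last i0_lt.
have [t' Et] : exists t', t = t'.+1 by exists t.-1; rewrite prednK.
rewrite Et in Gs *.
have [a [b [Ga Gb a_le ab_le]]] := mset_pow_split_le Gs le.
have b_neq0 : b != 0%MM := mset_pow_not_le_neq0 pow_not_le_v Gb.
have b_neqi0 : b != U_(i0)%MM by apply/eqP => bi0; apply: G_i0; rewrite -bi0.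
have [j aj_le] := le_add_unit a_le ab_le b_neq0 b_neqi0.
have j_lt : (j < n)%N.
  apply: ord_lt_max; apply: contraTneq aj_le => ->; apply/negP => /mnm_lepP/(_ mx).
  by rewrite mnmDE mnm1E eqxx drop_lastE eqxx addn1.
exists (a + (U_(mx) + U_(j)))%MM.
  exists a, (U_(mx) + U_(j))%MM; split => //; first by apply: mset_pow_sub Ga => m; left.
  by right; exists U_(mx)%MM, U_(j)%MM; split => //; exists j.
apply/mnm_lepP => l; move/mnm_lepP: aj_le => /(_ l).
by rewrite !mnmDE !mnm1E; lia.
Qed.

Lemma pow_gens_L_not_le_drop_last :
  ~ exists2 s, mset_pow (gens_L G) t s & (s <= drop_last v)%MM.
Proof.
case=> s Ls le; apply: pow_not_le_v; exists s.
  apply: mset_pow_gens_L_last0 Ls _.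
  by move/mnm_lepP: le => /(_ mx); rewrite drop_lastE eqxx leqn0 => /eqP.
exact: lepm_trans le (drop_last_le v).
Qed.

End LastVariable.

Lemma exists_var_notin (K : fieldType) n (I : {mpoly K[n.+1]} -> Prop) :
  ideal_eq I (mideal (mingens I)) ->
  (forall u, mingens I u -> u (@ord_max n) = 0%N) ->
  (forall u, mingens I u -> u != 0%MM) ->
  ~ ideal_eq I (ideal_gen (fun g => exists2 i : 'I_n.+1, (i < n)%N & g = 'X_i)) ->
  exists2 i0 : 'I_n.+1, (i0 < n)%N & ~ mingens I U_(i0).
Proof.
move=> I_G G_last0 G_neq0 I_neq_q; apply: NNPP => all_vars; apply: I_neq_q => f; split.
  move/I_G; apply: ideal_gen_min (ideal_gen_is_ideal _) _ => _ [u Gu ->].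
  have [j uj] := mnm_neq0P (G_neq0 _ Gu).
  apply: (ideal_gen_dvd_var _ uj); exists j => //; apply: ord_lt_max.
  by apply: contraNneq uj => ->; rewrite G_last0.
apply: ideal_gen_min (ideal_eq_is_ideal I_G (mideal_is_ideal _)) _ => _ [i lt_i ->].
apply/I_G; apply: mideal_gen; apply: NNPP => not_Gi; apply: all_vars; by exists i.
Qed.

Theorem proposition3p2 (K : fieldType) (n : nat) (I : {mpoly K[n.+1]} -> Prop)
  (t : nat) (v : 'X_{1..n.+1}) (lam : 'I_n.+1) :
  let mm := ideal_gen (fun g : {mpoly K[n.+1]} => exists i : 'I_n.+1, g = 'X_i) in
  let q := ideal_gen (fun g : {mpoly K[n.+1]} =>
             exists2 i : 'I_n.+1, (i < n)%N & g = 'X_i) in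
  let L := ideal_sum I
             (ideal_mul (ideal_gen (fun g => g = 'X_(@ord_max n))) q) in
  monomial_ideal I ->
  (forall u, mingens I u -> u (@ord_max n) = 0%N) ->
  ~ ideal_eq I q ->
  (1 <= t)%N ->
  ideal_eq (ideal_colon (ideal_pow I t) 'X_[v]) q ->
  (lam < n)%N ->
  (forall (f : 'I_t -> 'X_{1..n.+1}) (M : 'X_{1..n.+1}),
      (forall j, mingens I (f j)) ->
      (U_(lam) + v)%MM = (\big[mnm_add/0%MM]_(j < t) f j + M)%MM ->
      exists j : 'I_t, (U_(lam) <= M + f j)%MM /\ (M + f j)%MM <> U_(lam)%MM) ->
  is_ass (ideal_pow L t) mm.
Proof.
move=> mm q L monoI G_last0 I_neq_q t_gt0 colon_v _ _.
have I_G := monomial_idealE monoI.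
have q_vars : ideal_eq q (mideal (@vars_q n)).
  apply: ideal_gen_ext => g.
  by split=> [[i lt_i ->] | [_ [i lt_i ->] ->]]; [exists U_(i)%MM => //; exists i | exists i].
have L_G : ideal_eq L (mideal (gens_L (mingens I))).
  apply: mideal_sum I_G (mideal_mul _ q_vars); apply: ideal_gen_ext => g.
  by split=> [-> | [_ -> ->]]; last by []; exists U_(@ord_max n)%MM.
have It_G := mideal_pow t I_G; have Lt_G := mideal_pow t L_G.
have colon_q : forall i : 'I_n.+1, (i < n)%N ->
    exists2 s, mset_pow (mingens I) t s & (s <= U_(i) + v)%MM.
  move=> i lt_i; apply/midealXP/It_G; rewrite mpolyXD.
  by apply/colon_v; apply: ideal_gen_sub; exists i.
have not_le_v : ~ exists2 s, mset_pow (mingens I) t s & (s <= v)%MM.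
  move/midealXP/It_G => Iv; have : q 1 by apply/colon_v; rewrite /ideal_colon mul1r.
  rewrite -mpolyX0 => /q_vars/midealXP [_ [i _ ->]].
  by rewrite lep1mP mnm0E.
have [i0 lt_i0 G_i0] := exists_var_notin I_G G_last0
  (fun u => mset_pow_not_le_neq0 not_le_v) I_neq_q.
apply: (is_ass_maximal Lt_G (w := drop_last v)) => [i | /Lt_G/midealXP].
  rewrite -mpolyXD; apply/Lt_G/midealXP; have [-> | /ord_lt_max lt_i] := eqVneq i ord_max.
    exact: (colon_last_drop_last G_last0 t_gt0 lt_i0 G_i0 colon_q not_le_v).
  have [s Gs le] := colon_q_drop_last G_last0 colon_q lt_i.
  by exists s => //; apply: mset_pow_sub Gs => m; left.
exact: pow_gens_L_not_le_drop_last not_le_v.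
Qed.
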